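(* Let $h_{1},h_{2},f:\mathbb{C}\to\mathbb{C}$ be any functions, and let $a,b:\mathbb{C}\to\mathbb{C}$ be functions such that for all $x$ \[ b(x)=-h_{1}(x)h_{2}(x),\qquad f(x)a(x)=f(x-1)h_{1}(x)+f(x+1)h_{2}(x+1). \] Then the sequence $F_{n}=f(n)\cdot\prod_{k=1}^{n}h_{2}(k)$ solves the recurrence \[ F_{n-1}b(n)+F_{n}a(n)=F_{n+1}, \] and for every $n\ge 1$, \[ \mathbb{K}_{1}^{n}\frac{b(i)}{a(i)}=\frac{f(1)h_{2}(1)}{f(0)}\left(\frac{1}{\sum_{k=0}^{n}\frac{f(0)f(1)}{f(k)f(k+1)}\prod_{i=1}^{k}\left(\frac{h_{1}(i)}{h_{2}(i+1)}\right)}-1\right). \]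
   Context: For sequences $b_i,a_i$ of complex numbers, the finite continued fraction is \[ \mathbb{K}_{1}^{n}\frac{b_{i}}{a_{i}}:=\cfrac{b_{1}}{a_{1}+\cfrac{b_{2}}{a_{2}+\cfrac{b_{3}}{\ddots+\cfrac{b_{n}}{a_{n}+0}}}}\in\mathbb{C}\cup\{\infty\}, \] equivalently the image of $0$ under the composition of Möbius maps $z\mapsto \frac{b_1}{a_1+z}\circ\cdots\circ z\mapsto\frac{b_n}{a_n+z}$; here $\mathbb{K}_{1}^{n}\frac{b(i)}{a(i)}$ means $b_i=b(i)$, $a_i=a(i)$. *)

From mathcomp Require Import all_boot all_order all_algebra.
From mathcomp Require Import complex.
From mathcomp Require Import reals.
Set Implicit Arguments. Unset Strict Implicit. Unset Printing Implicit Defensive.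
Import Order.TTheory GRing.Theory Num.Theory.
Local Open Scope ring_scope.

(* The extended complex plane C ∪ {∞} is modelled as [option C]:
   [Some z] is the finite point z, [None] is ∞. *)

Definition mob {C : fieldType} (b a : C) (z : option C) : option C :=
  match z with
  | None => Some 0
  | Some w => if a + w == 0 then None else Some (b / (a + w))
  end.

Definition cfrac {C : fieldType} (b a : nat -> C) (n : nat) : option C :=
  foldr (fun i z => mob (b i) (a i) z) (Some 0) (iota 1 n).

From mathcomp Require Import all_boot all_order all_algebra.
From mathcomp Require Import complex reals.
From mathcomp Require Import ring zify.
Import Order.TTheory GRing.Theory Num.Theory.
Local Open Scope ring_scope.
Set Implicit Arguments. Unset Strict Implicit.

(* A pair (p, q) stands for the point p/q of C ∪ {∞}; the Möbius map
   z |-> b/(a + z) then acts linearly, by (p, q) |-> (b q, p + a q).  So the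
   n-th convergent is P_n/Q_n where both P and Q solve the three-term
   recurrence y_(n+2) = b_(n+2) y_n + a_(n+2) y_(n+1).  The hypothesis on a
   says that y_n = F_(n+1) is a solution, and since the summands t_k of S
   satisfy F_(k+2) t_(k+1) = - b_(k+1) F_k t_k, reduction of order yields the
   second solution y_n (t_0 + ... + t_n).  Comparing initial values at n = 0, 1
   expresses P and Q through these two solutions, and P_n/Q_n is the formula. *)

Section ContinuedFraction.
Variable C : fieldType.

Definition cf_proj (v : C * C) : option C :=
  if v.2 == 0 then None else Some (v.1 / v.2).

Definition cf_step (b a : C) (v : C * C) : C * C := (b * v.2, v.1 + a * v.2).

Lemma cf_step_neq0 b a v : b != 0 -> v != (0, 0) -> cf_step b a v != (0, 0).
Proof.
case: v => p q /= bn vn; apply/negP => /eqP [] /eqP.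
rewrite mulf_eq0 (negbTE bn) /= => /eqP q0; rewrite q0 mulr0 addr0 => p0.
by move: vn; rewrite p0 q0 eqxx.
Qed.

Lemma mob_cf_proj b a v :
  b != 0 -> v != (0, 0) -> mob b a (cf_proj v) = cf_proj (cf_step b a v).
Proof.
case: v => p q bn vn; rewrite /cf_proj /cf_step /=.
have [q0|qn] := eqVneq q 0.
  have pn : p != 0 by apply: contraNneq vn => ->; rewrite q0.
  by rewrite q0 !mulr0 addr0 (negbTE pn) mul0r.
have hom : p + a * q = (a + p / q) * q by field.
rewrite /= hom mulf_eq0 (negbTE qn) orbF.
have [//|an] := eqVneq (a + p / q) 0.
by congr Some; field; rewrite qn addrC hom mulf_neq0.
Qed.

Lemma foldr_mob_cf_proj (b a : nat -> C) s v :
  all (fun i => b i != 0) s -> v != (0, 0) ->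
  foldr (fun i z => mob (b i) (a i) z) (cf_proj v) s
    = cf_proj (foldr (fun i w => cf_step (b i) (a i) w) v s)
  /\ foldr (fun i w => cf_step (b i) (a i) w) v s != (0, 0).
Proof.
move=> + vn; elim: s => [//|i s IH] /= /andP [bi /IH [-> ws]].
by rewrite mob_cf_proj // cf_step_neq0.
Qed.

Definition convergent (b a : nat -> C) (n : nat) : C * C :=
  foldr (fun i v => cf_step (b i) (a i) v) (0, 1) (iota 1 n).

Lemma cfrac_convergent (b a : nat -> C) n :
  (forall i, (0 < i <= n)%N -> b i != 0) ->
  cfrac b a n = cf_proj (convergent b a n).
Proof.
move=> bn; rewrite /cfrac; have -> : Some (0 : C) = cf_proj (0, 1).
  by rewrite /cf_proj /= oner_eq0 mul0r.
apply: (proj1 (foldr_mob_cf_proj _ _ _)).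
  by apply/allP => i; rewrite mem_iota add1n ltnS => /bn.
by rewrite xpair_eqE oner_eq0 andbF.
Qed.

Lemma foldr_cf_step_linear (b a : nat -> C) s p q :
  let g v := foldr (fun i w => cf_step (b i) (a i) w) v s in
  g (p, q) = (p * (g (1, 0)).1 + q * (g (0, 1)).1, p * (g (1, 0)).2 + q * (g (0, 1)).2).
Proof.
elim: s p q => [|i s IH] p q /=; first by congr (_, _); ring.
rewrite IH; congr (_, _); rewrite /=; ring.
Qed.

Lemma convergentSS (b a : nat -> C) n :
  convergent b a n.+2 =
    (b n.+2 * (convergent b a n).1 + a n.+2 * (convergent b a n.+1).1,
     b n.+2 * (convergent b a n).2 + a n.+2 * (convergent b a n.+1).2).
Proof.
have iota1S m : iota 1 m.+1 = rcons (iota 1 m) m.+1.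
  by rewrite -cats1 -(addn1 m) iotaD add1n addn1.
have step01 b' a' : cf_step b' a' (0, 1) = (b', a') by rewrite /cf_step /= !mulr1 add0r.
have step10 b' a' : cf_step b' a' (1, 0) = (0, 1) by rewrite /cf_step /= !mulr0 addr0.
rewrite /convergent iota1S foldr_rcons step01 foldr_cf_step_linear.
by rewrite [in foldr _ (1, 0) _]iota1S foldr_rcons step10.
Qed.

End ContinuedFraction.

Section ThreeTermRecurrence.
Variables (C : fieldType) (b a : nat -> C) (N : nat).

Definition solves_rec (y : nat -> C) :=
  forall m, (m.+2 <= N)%N -> y m.+2 = b m.+2 * y m + a m.+2 * y m.+1.

Lemma solves_rec_lin (y z : nat -> C) (c d : C) :
  solves_rec y -> solves_rec z -> solves_rec (fun m => c * y m + d * z m).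
Proof. by move=> ry rz m hm; rewrite ry // rz //; ring. Qed.

Lemma solves_rec_eq (y z : nat -> C) :
  solves_rec y -> solves_rec z -> y 0%N = z 0%N -> y 1%N = z 1%N ->
  forall m, (m <= N)%N -> y m = z m.
Proof.
move=> ry rz y0 y1.
have two_step m : (m.+1 <= N)%N -> y m = z m /\ y m.+1 = z m.+1.
  elim: m => [//|m IH] hm; have [ym ym1] := IH (ltnW hm).
  by rewrite ry // rz // ym ym1.
by case=> [//|m] /two_step [].
Qed.

Lemma solves_rec_mul_sum (y t : nat -> C) :
  solves_rec y ->
  (forall m, (m.+2 <= N)%N -> y m.+2 * t m.+2 = - b m.+2 * (y m * t m.+1)) ->
  solves_rec (fun m => y m * \sum_(0 <= k < m.+1) t k).
Proof.
move=> ry yt m hm; rewrite !big_nat_recr //=.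
set T := \sum_(0 <= k < m) t k.
transitivity (y m.+2 * (T + t m + t m.+1) + y m.+2 * t m.+2); first by ring.
by rewrite yt // ry //; ring.
Qed.

End ThreeTermRecurrence.

Lemma convergent_solves (C : fieldType) (b a : nat -> C) N :
  solves_rec b a N (fun n => (convergent b a n).1) /\
  solves_rec b a N (fun n => (convergent b a n).2).
Proof. by split=> m _; rewrite convergentSS. Qed.

Section ClosedForm.
Variables (C : fieldType) (h1 h2 f a b : C -> C).
Hypothesis Hb : forall x, b x = - (h1 x * h2 x).
Hypothesis Ha : forall x, f x * a x = f (x - 1) * h1 x + f (x + 1) * h2 (x + 1).

Lemma Ha_nat m :
  f m.+1%:R * a m.+1%:R = f m%:R * h1 m.+1%:R + f m.+2%:R * h2 m.+2%:R.
Proof. by rewrite Ha -natr1 addrK !natr1. Qed.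

Definition Fseq n := f n%:R * \prod_(1 <= k < n.+1) h2 k%:R.

Definition tterm k :=
  f 0 * f 1 / (f k%:R * f k.+1%:R) * \prod_(1 <= i < k.+1) (h1 i%:R / h2 i.+1%:R).

Lemma Fseq1 : Fseq 1 = f 1 * h2 1.
Proof. by rewrite /Fseq big_nat1 mulr1n. Qed.

Lemma Fseq2 : Fseq 2 = f 2%:R * (h2 1 * h2 2%:R).
Proof. by rewrite /Fseq big_nat_recr //= big_nat1 mulr1n. Qed.

Lemma tterm0 : f 0 != 0 -> f 1 != 0 -> tterm 0 = 1.
Proof.
by move=> f0 f1; rewrite /tterm big_geq // mulr0n mulr1n mulr1 divff ?mulf_neq0.
Qed.

Lemma tterm1 :
  f 1 != 0 -> f 2%:R != 0 -> h2 2%:R != 0 ->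
  tterm 1 = f 0 * h1 1 / (f 2%:R * h2 2%:R).
Proof.
by move=> f1 f2 h22; rewrite /tterm big_nat1 mulr1n; field; rewrite f1 f2 h22.
Qed.

Lemma Fseq_rec m : Fseq m * b m.+1%:R + Fseq m.+1 * a m.+1%:R = Fseq m.+2.
Proof.
rewrite /Fseq (big_nat_recr m.+2) // (big_nat_recr m.+1) //= Hb.
set P := \prod_(1 <= k < m.+1) h2 k%:R.
transitivity (P * h2 m.+1%:R * (f m.+1%:R * a m.+1%:R - f m%:R * h1 m.+1%:R)).
  by ring.
by rewrite Ha_nat; ring.
Qed.

Lemma Fseq_tterm m :
  f m.+1%:R != 0 -> f m.+2%:R != 0 -> f m.+3%:R != 0 -> h2 m.+3%:R != 0 ->
  Fseq m.+3 * tterm m.+2 = - b m.+2%:R * (Fseq m.+1 * tterm m.+1).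
Proof.
move=> f1n f2n f3n h3n; rewrite /Fseq /tterm Hb opprK.
rewrite (big_nat_recr m.+3) // (big_nat_recr m.+2) // (big_nat_recr m.+2) //=.
by field; rewrite f1n f2n f3n h3n.
Qed.

Lemma convergent_closed_form n :
  (1 <= n)%N ->
  (forall k, (k <= n.+1)%N -> f k%:R != 0) ->
  (forall i, (1 <= i <= n.+1)%N -> h2 i%:R != 0) ->
  let S := \sum_(0 <= k < n.+1) tterm k in
  convergent (fun i => b i%:R) (fun i => a i%:R) n =
    (Fseq n.+1 * (1 - S) / f 0, Fseq n.+1 * S / (f 1 * h2 1)).
Proof.
move=> n1 fn h2n S.
have f0 : f 0 != 0 by have := fn 0%N isT; rewrite mulr0n.
have f1 : f 1 != 0 by have := fn 1%N isT; rewrite mulr1n.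
have f2 : f 2%:R != 0 by apply: fn; lia.
have h21 : h2 1 != 0 by have := h2n 1%N isT; rewrite mulr1n.
have h22 : h2 2%:R != 0 by apply: h2n; lia.
pose y m := Fseq m.+1.
pose z m := y m * \sum_(0 <= k < m.+1) tterm k.
have ry : solves_rec (fun i => b i%:R) (fun i => a i%:R) n y.
  by move=> m _; rewrite /y -Fseq_rec; ring.
have rz : solves_rec (fun i => b i%:R) (fun i => a i%:R) n z.
  apply: solves_rec_mul_sum ry _ => m hm.
  by apply: Fseq_tterm; (apply: fn || apply: h2n); lia.
have [rp rq] := convergent_solves (fun i => b i%:R) (fun i => a i%:R) n.
have z0 : z 0%N = y 0%N by rewrite /z big_nat1 tterm0 ?mulr1.
have z1 : z 1%N = y 1%N * (1 + f 0 * h1 1 / (f 2%:R * h2 2%:R)).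
  by rewrite /z big_nat_recr //= big_nat1 tterm0 ?tterm1.
have b1 : b 1%:R = - (h1 1 * h2 1) by rewrite Hb mulr1n.
have a1 : a 1%:R = (f 0 * h1 1 + f 2%:R * h2 2%:R) / f 1.
  have := Ha_nat 0; rewrite mulr0n !mulr1n => fa1.
  by rewrite -[a 1](mulKf f1) fa1 mulrC.
rewrite [LHS]surjective_pairing; congr (_, _).
  rewrite (solves_rec_eq rp (solves_rec_lin (f 0)^-1 (- (f 0)^-1) ry rz)) //=.
  - by rewrite /z /y /S; field.
  - by rewrite z0; ring.
  - by rewrite z1 /y Fseq2 b1; field; rewrite f0 f2 h22.
rewrite (solves_rec_eq rq (solves_rec_lin 0 (f 1 * h2 1)^-1 ry rz)) //=.
- by rewrite /z /y /S; field; rewrite f1 h21.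
- by rewrite z0 /y Fseq1; field; rewrite f1 h21.
- by rewrite z1 /y Fseq2 a1; field; rewrite f1 f2 h21 h22.
Qed.

End ClosedForm.

Theorem theorem1 (R : realType) (h1 h2 f a b : R[i] -> R[i])
  (Hb : forall x, b x = - (h1 x * h2 x))
  (Ha : forall x, f x * a x = f (x - 1) * h1 x + f (x + 1) * h2 (x + 1)) :
  let F := fun n : nat => f n%:R * \prod_(1 <= k < n.+1) h2 k%:R in
  (forall n : nat, (1 <= n)%N -> F n.-1 * b n%:R + F n * a n%:R = F n.+1) /\
  (forall n : nat, (1 <= n)%N ->
     (forall k : nat, (k <= n.+1)%N -> f k%:R != 0) ->
     (forall i : nat, (1 <= i <= n)%N -> h1 i%:R != 0) ->
     (forall i : nat, (1 <= i <= n.+1)%N -> h2 i%:R != 0) ->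
     let S := \sum_(0 <= k < n.+1)
                (f 0 * f 1) / (f k%:R * f k.+1%:R)
                * \prod_(1 <= i < k.+1) (h1 i%:R / h2 i.+1%:R) in
     cfrac (fun i => b i%:R) (fun i => a i%:R) n =
       (if S == 0 then None (* 1/S = ∞, and c*(∞-1) = ∞ since c <> 0 *)
        else Some ((f 1 * h2 1) / f 0 * (S^-1 - 1)))).
Proof.
move=> F; split; first by case=> // m _; exact: Fseq_rec Hb Ha m.
move=> n n1 fn h1n h2n S.
rewrite cfrac_convergent; last first.
  by move=> i /andP [i0 iln]; rewrite Hb oppr_eq0 mulf_neq0 ?h1n ?h2n //; lia.
rewrite (convergent_closed_form Hb Ha n1 fn h2n) -/S /cf_proj /=.
have Fn : Fseq h2 f n.+1 != 0.
  rewrite mulf_neq0 ?fn // prodf_seq_neq0.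
  by apply/allP => i; rewrite mem_index_iota => /andP [i1 iln]; apply: h2n; lia.
have f0 : f 0 != 0 by have := fn 0%N isT; rewrite mulr0n.
have f1 : f 1 != 0 by have := fn 1%N isT; rewrite mulr1n.
have h21 : h2 1 != 0 by have := h2n 1%N isT; rewrite mulr1n.
have [->|Sn] := eqVneq S 0; first by rewrite mulr0 mul0r eqxx.
have den : Fseq h2 f n.+1 * S / (f 1 * h2 1) != 0.
  by apply: mulf_neq0; [apply: mulf_neq0 | rewrite invr_eq0 mulf_neq0].
by rewrite (negbTE den); congr Some; field; rewrite Sn f0 f1 h21 Fn.
Qed.
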